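(* Let $d\geqslant 1$ be an integer and $x$ a real number with $d+1\leqslant x/2$. Then $$\sum_{K_{d+1}-d-1<k\leqslant K_{d+1}}\Big(d^2\lfloor x/k\rfloor+\frac{2dx}{\lfloor x/k\rfloor}-x^2F(x/k)\Big)=\frac{8d^2+4d-1}{3}\sqrt{(d+1)x}+O(d^{7/2}x^{-1/2})+O(d^2),$$ where $k$ runs over integers, with absolute implied constants.
   Context: $\lfloor\cdot\rfloor$ denotes the integer part. For an integer $d\geqslant 0$ and real $x>0$, $K_d=K_d(x)=\big\lfloor \big(d+\sqrt{d^2+4dx}\,\big)/2\big\rfloor$. For real $t$, $F(t)=\sum_{n>t-1}\frac{1}{n^2(n+1)^2}$, summed over positive integers $n>t-1$. *)

From Stdlib Require Import Reals Lra Lia ZArith.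
From Coquelicot Require Import Coquelicot.
Open Scope R_scope.

Definition floorR (r : R) : Z := Int_part r.

Definition Kd (d : nat) (x : R) : Z :=
  floorR ((INR d + sqrt (INR d ^ 2 + 4 * INR d * x)) / 2).

Definition F_term (t : R) (n : nat) : R :=
  match n with
  | O => 0
  | S _ => if Rlt_dec (t - 1) (INR n)
           then 1 / (INR n ^ 2 * (INR n + 1) ^ 2) else 0
  end.

Definition F (t : R) : R := Series (F_term t).

Definition summand (d : nat) (x : R) (k : Z) : R :=
  let q := IZR (floorR (x / IZR k)) in
  INR d ^ 2 * q + 2 * INR d * x / q - x ^ 2 * F (x / IZR k).

(* sum over integers k with K - d - 1 < k <= K, i.e. k = K - i, i = 0..d *)
Definition LHS (d : nat) (x : R) : R :=
  let K := Kd (S d) x in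
  sum_f_R0 (fun i => summand d x (K - Z.of_nat i)%Z) d.

From Stdlib Require Import Reals Lra Lia ZArith.
From Coquelicot Require Import Coquelicot.
Open Scope R_scope.

(** Write D = d + 1 and s = sqrt (D x).  Since F t = 1/(3 q^3) + O(q^-5) for q = floor t,
    replacing floor (x/k) by x/k and F (x/k) by its leading term turns the summand into
    the smooth function h(k) = d^2 x/k + 2 d k - k^3/(3x), at a cost bounded by
    (d - k^2/x)^2 and k^5/x^3, both O(1 + D^3/s) because K_{d+1} - d/2 lies within
    O(1 + D^2/s) of s.  Expanding h to first order at the centre m = K_{d+1} - d/2 of the
    summation window, the linear terms cancel over the symmetric range, leaving D h(m)
    up to O(D^4/s), and D h(s + e) = (8d^2+4d-1) s/3 + O(D^2 + D^4/s). *)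

Lemma div_le_div (a a' b b' : R) : 0 <= a <= a' -> 0 < b' <= b -> a / b <= a' / b'.
Proof.
  intros Ha Hb. unfold Rdiv. apply Rmult_le_compat; try lra.
  - left; apply Rinv_0_lt_compat; lra.
  - apply Rinv_le_contravar; lra.
Qed.

Lemma is_series_telescope (g : nat -> R) :
  is_lim_seq g 0 -> is_series (fun n => g n - g (S n)) (g O).
Proof.
  intro Hg.
  assert (Hsum : forall N, sum_n (fun n => g n - g (S n)) N = g O - g (S N)).
  { induction N as [|N IH]; [now rewrite sum_O|].
    rewrite sum_Sn, IH. unfold plus; simpl. ring. }
  enough (H : is_lim_seq (sum_n (fun n => g n - g (S n))) (g O)) by exact H.
  apply (is_lim_seq_ext (fun N => g O - g (S N))); [intro N; now rewrite Hsum|].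
  replace (Finite (g O)) with (Rbar_minus (g O) 0) by (simpl; f_equal; ring).
  apply is_lim_seq_minus'; [apply is_lim_seq_const|].
  now apply (is_lim_seq_incr_1 g).
Qed.

Lemma Series_le_telescope (a g : nat -> R) :
  is_lim_seq g 0 -> (forall n, 0 <= a n <= g n - g (S n)) ->
  ex_series a /\ Series a <= g O.
Proof.
  intros Hg Ha.
  pose proof (is_series_telescope g Hg) as Hs.
  assert (Hex : ex_series (fun n => g n - g (S n))) by (eexists; exact Hs).
  split.
  - apply (@ex_series_le R_AbsRing R_CompleteNormedModule a (fun n => g n - g (S n))); [|exact Hex].
    intro n. change (Rabs (a n) <= g n - g (S n)). rewrite Rabs_pos_eq; apply Ha.
  - rewrite <- (is_series_unique _ _ Hs). now apply Series_le.
Qed.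

Lemma Series_ge_telescope (a h : nat -> R) :
  is_lim_seq h 0 -> ex_series a -> (forall n, h n - h (S n) <= a n) ->
  h O <= Series a.
Proof.
  intros Hh Hex Ha.
  pose proof (is_series_telescope h Hh) as Hs.
  apply (is_lim_seq_le (sum_n (fun n => h n - h (S n))) (sum_n a) (h O) (Series a));
    [|exact Hs|].
  - intro N. rewrite !sum_n_Reals. apply sum_Rle. intros n _. apply Ha.
  - exact (Series_correct a Hex).
Qed.

Lemma is_lim_seq_le_inv_INR (u : nat -> R) :
  (forall k, 0 <= u k <= / INR (S k)) -> is_lim_seq u 0.
Proof.
  intro Hu. apply (is_lim_seq_le_le (fun _ => 0) u (fun k => / INR (S k))); [exact Hu|apply is_lim_seq_const|].
  apply (is_lim_seq_incr_1 (fun k => / INR k)).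
  replace (Finite 0) with (Rbar_inv p_infty) by reflexivity.
  apply is_lim_seq_inv; [exact is_lim_seq_INR|discriminate].
Qed.

Definition F_upper (a : R) : R := 1 / (3 * a ^ 3).
Definition F_lower (a : R) : R := F_upper a - 1 / (3 * a ^ 5).

Lemma F_upper_telescope (a : R) : 1 <= a ->
  0 <= 1 / (a ^ 2 * (a + 1) ^ 2) <= F_upper a - F_upper (a + 1).
Proof.
  intro Ha. unfold F_upper. split.
  - apply Rdiv_le_0_compat; [lra|]. apply Rmult_lt_0_compat; apply pow_lt; lra.
  - assert (E : F_upper a - F_upper (a + 1) - 1 / (a ^ 2 * (a + 1) ^ 2)
                = 1 / (3 * a ^ 3 * (a + 1) ^ 3)) by (unfold F_upper; field; lra).
    unfold F_upper in E.
    assert (0 < 1 / (3 * a ^ 3 * (a + 1) ^ 3)).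
    { apply Rdiv_lt_0_compat; [lra|].
      repeat apply Rmult_lt_0_compat; try apply pow_lt; lra. }
    lra.
Qed.

Lemma F_lower_telescope (a : R) : 1 <= a ->
  F_lower a - F_lower (a + 1) <= 1 / (a ^ 2 * (a + 1) ^ 2).
Proof.
  intro Ha.
  assert (E : 1 / (a ^ 2 * (a + 1) ^ 2) - (F_lower a - F_lower (a + 1))
              = ((a + 1) ^ 5 - a ^ 5 - a ^ 2 * (a + 1) ^ 2) / (3 * a ^ 5 * (a + 1) ^ 5))
    by (unfold F_lower, F_upper; field; lra).
  assert (0 <= ((a + 1) ^ 5 - a ^ 5 - a ^ 2 * (a + 1) ^ 2) / (3 * a ^ 5 * (a + 1) ^ 5)).
  { apply Rdiv_le_0_compat.
    - assert (0 <= a ^ 2) by nra. assert (0 <= a ^ 3) by nra. nra.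
    - repeat apply Rmult_lt_0_compat; try apply pow_lt; lra. }
  lra.
Qed.

Lemma F_lower_upper_le_inv_INR (n k : nat) : (1 <= n)%nat ->
  0 <= F_lower (INR (n + k)) /\ F_lower (INR (n + k)) <= F_upper (INR (n + k))
  /\ F_upper (INR (n + k)) <= / INR (S k).
Proof.
  intro Hn. set (a := INR (n + k)).
  assert (Ha : INR (S k) <= a) by (apply le_INR; lia).
  assert (H1 : 1 <= INR (S k)) by (apply (le_INR 1); lia).
  unfold F_lower, F_upper.
  assert (0 < 1 / (3 * a ^ 5)) by (apply Rdiv_lt_0_compat; [|apply Rmult_lt_0_compat; [|apply pow_lt]]; lra).
  assert (1 / (3 * a ^ 5) <= 1 / (3 * a ^ 3)).
  { apply Rmult_le_compat_l; [lra|]. apply Rinv_le_contravar; [apply Rmult_lt_0_compat; [|apply pow_lt]; lra|].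
    assert (1 <= a ^ 2) by (simpl; nra).
    replace (a ^ 5) with (a ^ 3 * a ^ 2) by ring.
    assert (0 < a ^ 3) by (apply pow_lt; lra). nra. }
  assert (1 / (3 * a ^ 3) <= / INR (S k)).
  { unfold Rdiv. rewrite Rmult_1_l. apply Rinv_le_contravar; [lra|].
    assert (a <= a ^ 3) by (simpl; nra). lra. }
  lra.
Qed.

Lemma F_term_above_floor (t : R) (n m : nat) : (1 <= n)%nat -> INR n <= t < INR n + 1 ->
  F_term t m = if (n <=? m)%nat then 1 / (INR m ^ 2 * (INR m + 1) ^ 2) else 0.
Proof.
  intros Hn [Ht1 Ht2]. destruct m as [|m].
  - destruct (Nat.leb_spec n 0); [lia|reflexivity].
  - unfold F_term. destruct (Nat.leb_spec n (S m)) as [Hl|Hl];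
      destruct (Rlt_dec (t - 1) (INR (S m))) as [h|h]; try reflexivity.
    + apply le_INR in Hl. apply Rnot_lt_le in h. lra.
    + assert (Hl' : (S m + 1 <= n)%nat) by lia. apply le_INR in Hl'.
      rewrite plus_INR in Hl'. change (INR 1) with 1 in Hl'. lra.
Qed.

Lemma F_sandwich (t : R) (n : nat) : (1 <= n)%nat -> INR n <= t < INR n + 1 ->
  F_lower (INR n) <= F t <= F_upper (INR n).
Proof.
  intros Hn Ht.
  set (b k := 1 / (INR (n + k) ^ 2 * (INR (n + k) + 1) ^ 2)).
  assert (Hshift : forall k, INR (n + S k) = INR (n + k) + 1)
    by (intro k; rewrite <- S_INR; f_equal; lia).
  assert (Hge1 : forall k, 1 <= INR (n + k)) by (intro k; apply (le_INR 1); lia).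
  destruct (Series_le_telescope b (fun k => F_upper (INR (n + k)))) as [Hex Hup].
  { apply is_lim_seq_le_inv_INR. intro k. pose proof (F_lower_upper_le_inv_INR n k Hn). lra. }
  { intro k. unfold b. rewrite Hshift. exact (F_upper_telescope _ (Hge1 k)). }
  assert (Hlow : F_lower (INR (n + 0)) <= Series b).
  { apply (Series_ge_telescope b (fun k => F_lower (INR (n + k)))); [|exact Hex|].
    - apply is_lim_seq_le_inv_INR. intro k. pose proof (F_lower_upper_le_inv_INR n k Hn). lra.
    - intro k. unfold b. rewrite Hshift. exact (F_lower_telescope _ (Hge1 k)). }
  assert (HF : F t = Series b).
  { apply is_series_unique. apply (is_series_decr_n _ n); [lia|].
    rewrite sum_n_Reals, sum_eq_R0.
    - match goal with |- is_series _ ?l => replace l with (Series b) end;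
        [|unfold plus, opp; simpl; ring].
      apply (is_series_ext b); [|exact (Series_correct b Hex)].
      intro k. rewrite (F_term_above_floor t n (n + k) Hn Ht).
      destruct (Nat.leb_spec n (n + k)); [reflexivity|lia].
    - intros m Hm. rewrite (F_term_above_floor t n m Hn Ht).
      destruct (Nat.leb_spec n m); [lia|reflexivity]. }
  rewrite Nat.add_0_r in Hup, Hlow. rewrite HF. split; assumption.
Qed.

Definition smooth (d x k : R) : R := d ^ 2 * x / k + 2 * d * k - k ^ 3 / (3 * x).

Lemma smooth_inv_difference (d x q t : R) : 0 < x -> 0 < q -> 0 < t ->
  smooth d x (x / q) - smooth d x (x / t)
  = - (t - q) * ((d - x / (q * t)) ^ 2 + x ^ 2 * (t - q) ^ 2 / (3 * q ^ 3 * t ^ 3)).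
Proof. intros Hx Hq Ht. unfold smooth. field. repeat split; lra. Qed.

Lemma smooth_floor_error (d x q t : R) : 0 < x -> 1 <= q <= t -> t < q + 1 ->
  Rabs (smooth d x (x / q) - smooth d x (x / t))
  <= 2 * (d - x / t ^ 2) ^ 2 + 32 / 3 * (x ^ 2 / t ^ 5).
Proof.
  intros Hx [Hq Hqt] Htq.
  assert (Ht : 1 <= t) by lra.
  assert (Htq2 : (t - q) ^ 2 <= 1) by (simpl; nra).
  set (c := x / (q * t)). set (w := x ^ 2 * (t - q) ^ 2 / (3 * q ^ 3 * t ^ 3)).
  pose proof (smooth_inv_difference d x q t Hx ltac:(lra) ltac:(lra)) as E. fold c w in E.
  assert (Hw : 0 <= w <= 8 / 3 * (x ^ 2 / t ^ 5)).
  { assert (Hden : 0 < 3 * q ^ 3 * t ^ 5)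
      by (repeat apply Rmult_lt_0_compat; try apply pow_lt; lra).
    assert (E' : 8 / 3 * (x ^ 2 / t ^ 5) - w
                 = x ^ 2 * (8 * q ^ 3 - t ^ 2 * (t - q) ^ 2) / (3 * q ^ 3 * t ^ 5))
      by (unfold w; field; lra).
    assert (0 <= x ^ 2 * (t - q) ^ 2) by (apply Rmult_le_pos; apply pow2_ge_0).
    assert (0 <= x ^ 2 * (8 * q ^ 3 - t ^ 2 * (t - q) ^ 2) / (3 * q ^ 3 * t ^ 5)).
    { apply Rdiv_le_0_compat; [|lra]. apply Rmult_le_pos; [apply pow2_ge_0|].
      assert (t ^ 2 * (t - q) ^ 2 <= t ^ 2 * 1)
        by (apply Rmult_le_compat_l; [apply pow2_ge_0|lra]).
      simpl in *; nra. }
    split; [|lra]. unfold w. apply Rdiv_le_0_compat; [lra|].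
    repeat apply Rmult_lt_0_compat; try apply pow_lt; lra. }
  assert (Hc : (c - x / t ^ 2) ^ 2 <= 4 * (x ^ 2 / t ^ 5)).
  { assert (E' : 4 * (x ^ 2 / t ^ 5) - (c - x / t ^ 2) ^ 2
                 = x ^ 2 * (4 * q ^ 2 - t * (t - q) ^ 2) / (q ^ 2 * t ^ 5))
      by (unfold c; field; lra).
    assert (0 <= x ^ 2 * (4 * q ^ 2 - t * (t - q) ^ 2) / (q ^ 2 * t ^ 5)).
    { apply Rdiv_le_0_compat; [|apply Rmult_lt_0_compat; apply pow_lt; lra].
      apply Rmult_le_pos; [apply pow2_ge_0|].
      assert (t * (t - q) ^ 2 <= t * 1) by (apply Rmult_le_compat_l; lra).
      simpl in *; nra. }
    lra. }
  assert (Hdc : (d - c) ^ 2 <= 2 * (d - x / t ^ 2) ^ 2 + 2 * (c - x / t ^ 2) ^ 2)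
    by (pose proof (pow2_ge_0 (d - x / t ^ 2 + (c - x / t ^ 2))); nra).
  rewrite E, Rabs_mult, Rabs_Ropp, (Rabs_pos_eq (t - q)) by lra.
  rewrite (Rabs_pos_eq (_ + w)) by (pose proof (pow2_ge_0 (d - c)); lra).
  assert (0 <= (d - c) ^ 2) by apply pow2_ge_0.
  assert ((t - q) * ((d - c) ^ 2 + w) <= 1 * ((d - c) ^ 2 + w))
    by (apply Rmult_le_compat_r; lra).
  lra.
Qed.

Lemma F_floor_error (x q t G : R) : 1 <= q <= t -> t < q + 1 ->
  F_lower q <= G <= F_upper q -> 0 <= x ^ 2 * (F_upper q - G) <= 32 / 3 * (x ^ 2 / t ^ 5).
Proof.
  intros [Hq Hqt] Htq HG.
  assert (H5 : t ^ 5 <= (2 * q) ^ 5) by (apply pow_incr; lra).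
  assert (Hgap : F_upper q - F_lower q <= 32 / 3 / t ^ 5).
  { assert (0 < t ^ 5) by (apply pow_lt; lra).
    assert (E : 32 / 3 / t ^ 5 - (F_upper q - F_lower q) = (32 * q ^ 5 - t ^ 5) / (3 * q ^ 5 * t ^ 5))
      by (unfold F_lower, F_upper; field; lra).
    assert (0 <= (32 * q ^ 5 - t ^ 5) / (3 * q ^ 5 * t ^ 5)).
    { apply Rdiv_le_0_compat; [simpl in *; lra|].
      repeat apply Rmult_lt_0_compat; try apply pow_lt; lra. }
    lra. }
  assert (0 <= x ^ 2) by apply pow2_ge_0.
  split; [apply Rmult_le_pos; lra|].
  replace (32 / 3 * (x ^ 2 / t ^ 5)) with (x ^ 2 * (32 / 3 / t ^ 5)) by (field; lra).
  apply Rmult_le_compat_l; lra.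
Qed.

Lemma floorR_spec (r : R) : IZR (floorR r) <= r < IZR (floorR r) + 1.
Proof. unfold floorR. destruct (base_Int_part r). lra. Qed.

Lemma summand_near_smooth (d : nat) (x : R) (k : Z) : 0 < IZR k <= x ->
  Rabs (summand d x k - smooth (INR d) x (IZR k))
  <= 2 * (INR d - IZR k ^ 2 / x) ^ 2 + 22 * (IZR k ^ 5 / x ^ 3).
Proof.
  intros Hk. set (t := x / IZR k).
  assert (Ht : 1 <= t) by (unfold t; apply Rmult_le_reg_r with (IZR k); [lra|]; field_simplify; lra).
  destruct (floorR_spec t) as [Hq1 Hq2]. set (q := IZR (floorR t)) in *.
  assert (Hq : 1 <= q).
  { assert (0 < q) by lra. apply IZR_le. apply lt_IZR in H. lia. }
  set (n := Z.to_nat (floorR t)).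
  assert (Hn : INR n = q).
  { unfold n, q. rewrite INR_IZR_INZ, Z2Nat.id; [reflexivity|]. apply le_IZR. fold q. lra. }
  assert (Hn1 : (1 <= n)%nat) by (apply INR_le; rewrite Hn; simpl; lra).
  pose proof (F_sandwich t n Hn1 ltac:(rewrite Hn; lra)) as HF. rewrite Hn in HF.
  assert (Hsplit : summand d x k - smooth (INR d) x (IZR k)
                   = (smooth (INR d) x (x / q) - smooth (INR d) x (x / t))
                     + x ^ 2 * (F_upper q - F t)).
  { unfold summand. cbv zeta. fold t q. unfold smooth, F_upper, t. field. lra. }
  pose proof (smooth_floor_error (INR d) x q t ltac:(lra) ltac:(lra) Hq2) as H1.
  pose proof (F_floor_error x q t (F t) ltac:(lra) Hq2 HF) as H2.
  replace (x / t ^ 2) with (IZR k ^ 2 / x) in H1 by (unfold t; field; lra).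
  replace (x ^ 2 / t ^ 5) with (IZR k ^ 5 / x ^ 3) in H1, H2 by (unfold t; field; lra).
  rewrite Hsplit. eapply Rle_trans; [apply Rabs_triang|].
  rewrite (Rabs_pos_eq (x ^ 2 * _)) by lra. lra.
Qed.

Definition smooth_deriv (d x k : R) : R := - (d ^ 2 * x / k ^ 2) + 2 * d - k ^ 2 / x.

Section Scale.

(* Every lemma of the section takes all its hypotheses, so that they share one signature. *)
Set Default Proof Using "All".

Variables d x s : R.
Hypothesis Hd : 1 <= d.
Hypothesis Hx : 0 < x.
Hypothesis Hs : 0 < s.
Hypothesis Hsx : s ^ 2 = (d + 1) * x.
Hypothesis Hlarge : 2 * (d + 1) ^ 2 <= s ^ 2.

Local Notation D := (d + 1).

Lemma D_lt_s : D < s.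
Proof.
  destruct (Rlt_or_le D s) as [h|h]; [exact h|].
  assert (s * s <= D * D) by (apply Rmult_le_compat; lra). simpl in Hlarge. nra.
Qed.

Lemma x_eq_s2_div_D : x = s ^ 2 / D.
Proof. rewrite Hsx. field. lra. Qed.

Lemma D2_div_s_le : 0 <= D ^ 2 / s <= s / 2.
Proof.
  split; [apply Rdiv_le_0_compat; [apply pow2_ge_0|lra]|].
  replace (s / 2) with ((s ^ 2 / 2) / s) by (field; lra).
  apply div_le_div; [split; [apply pow2_ge_0|lra]|lra].
Qed.

Lemma smooth_error_near_s (k : R) : s - D <= k <= s + D ->
  2 * (d - k ^ 2 / x) ^ 2 + 22 * (k ^ 5 / x ^ 3) <= 4 + 740 * (D ^ 3 / s).
Proof.
  intro Hk. pose proof D_lt_s. pose proof x_eq_s2_div_D as Hxe.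
  assert (Hk0 : 0 < k) by lra.
  assert (E1 : k ^ 2 / x - D = D * (k ^ 2 - s ^ 2) / s ^ 2) by (rewrite Hxe; field; lra).
  assert (Hks : - (3 * D * s) <= k ^ 2 - s ^ 2 <= 3 * D * s) by nra.
  assert (Hz : Rabs (k ^ 2 / x - D) <= 3 * (D ^ 2 / s)).
  { rewrite E1. replace (3 * (D ^ 2 / s)) with (D * (3 * D * s) / s ^ 2) by (field; lra).
    assert (0 < s ^ 2) by (apply pow_lt; lra).
    assert (0 < / s ^ 2) by (apply Rinv_0_lt_compat; lra).
    unfold Rdiv. rewrite !Rabs_mult, (Rabs_pos_eq D), (Rabs_pos_eq (/ s ^ 2)) by lra.
    apply Rmult_le_compat_r; [left; apply Rinv_0_lt_compat; lra|].
    apply Rmult_le_compat_l; [lra|]. apply Rabs_le. lra. }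
  set (Y := D ^ 2 / s) in *.
  assert (HY2 : Y ^ 2 <= D ^ 3 / s).
  { unfold Y. replace ((D ^ 2 / s) ^ 2) with (D ^ 3 / s * (D / s)) by (field; lra).
    assert (D / s <= 1)
      by (apply Rle_trans with (s / s); [apply div_le_div; lra|right; field; lra]).
    assert (0 <= D ^ 3 / s) by (apply Rdiv_le_0_compat; [apply pow_le|]; lra).
    nra. }
  assert (Hz2 : (k ^ 2 / x - D) ^ 2 <= 9 * (D ^ 3 / s)).
  { assert ((k ^ 2 / x - D) ^ 2 <= (3 * Y) ^ 2)
      by (rewrite <- pow2_abs; apply pow_incr; split; [apply Rabs_pos|exact Hz]).
    nra. }
  assert (HA : 2 * (d - k ^ 2 / x) ^ 2 <= 4 + 36 * (D ^ 3 / s)).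
  { replace (d - k ^ 2 / x) with (- (1 + (k ^ 2 / x - D))) by lra.
    pose proof (pow2_ge_0 (1 - (k ^ 2 / x - D))). nra. }
  assert (HB : k ^ 5 / x ^ 3 <= 32 * (D ^ 3 / s)).
  { rewrite Hxe. replace (32 * (D ^ 3 / s)) with ((2 * s) ^ 5 / (s ^ 2 / D) ^ 3) by (field; lra).
    apply div_le_div; [split; [apply pow_le; lra|apply pow_incr; lra]|].
    split; [apply pow_lt; apply Rdiv_lt_0_compat; [apply pow_lt|]; lra|lra]. }
  lra.
Qed.

Lemma smooth_taylor_remainder (m j : R) : 0 < m -> 0 < m + j ->
  smooth d x (m + j) - (smooth d x m + j * smooth_deriv d x m)
  = d ^ 2 * x * j ^ 2 / (m ^ 2 * (m + j)) - (3 * m * j ^ 2 + j ^ 3) / (3 * x).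
Proof. intros Hm Hmj. unfold smooth, smooth_deriv. field. lra. Qed.

Lemma smooth_taylor (m j : R) : s / 2 <= m <= 2 * s -> Rabs j <= D / 2 -> s / 2 <= m + j ->
  Rabs (smooth d x (m + j) - (smooth d x m + j * smooth_deriv d x m)) <= 3 * (D ^ 3 / s).
Proof.
  intros Hm Hj Hmj. pose proof D_lt_s. pose proof x_eq_s2_div_D as Hxe.
  apply Rabs_le_between in Hj.
  pose proof (smooth_taylor_remainder m j ltac:(lra) ltac:(lra)) as E.
  assert (Hj2 : j ^ 2 <= (D / 2) ^ 2)
    by (rewrite <- pow2_abs; apply pow_incr; split; [apply Rabs_pos|apply Rabs_le; lra]).
  assert (Hj3 : Rabs (j ^ 3) <= (D / 2) ^ 3)
    by (rewrite <- RPow_abs; apply pow_incr; split; [apply Rabs_pos|apply Rabs_le; lra]).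
  assert (Hnum : 0 <= d ^ 2 * x * j ^ 2).
  { apply Rmult_le_pos; [apply Rmult_le_pos; [apply pow_le|]|apply pow2_ge_0]; lra. }
  assert (H1 : 0 <= d ^ 2 * x * j ^ 2 / (m ^ 2 * (m + j)) <= 2 * (D ^ 3 / s)).
  { split; [apply Rdiv_le_0_compat; [|apply Rmult_lt_0_compat; [apply pow_lt|]]; lra|].
    replace (2 * (D ^ 3 / s)) with ((D ^ 2 * (D / 2) ^ 2 * x) / ((s / 2) ^ 2 * (s / 2)))
      by (rewrite Hxe; field; lra).
    apply div_le_div.
    - split; [exact Hnum|].
      replace (d ^ 2 * x * j ^ 2) with ((d ^ 2 * j ^ 2) * x) by ring.
      apply Rmult_le_compat_r; [lra|].
      apply Rmult_le_compat; [apply pow2_ge_0|apply pow2_ge_0|apply pow_incr; lra|lra].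
    - split; [apply Rmult_lt_0_compat; [apply pow_lt|]; lra|].
      apply Rmult_le_compat; [apply pow2_ge_0|lra|apply pow_incr; lra|lra]. }
  assert (H2 : Rabs ((3 * m * j ^ 2 + j ^ 3) / (3 * x)) <= 2 / 3 * (D ^ 3 / s)).
  { assert (Hn : Rabs (3 * m * j ^ 2 + j ^ 3) <= 2 * s * D ^ 2).
    { eapply Rle_trans; [apply Rabs_triang|].
      rewrite Rabs_pos_eq by (apply Rmult_le_pos; [lra|apply pow2_ge_0]).
      assert (3 * m * j ^ 2 <= 3 * (2 * s) * (D / 2) ^ 2)
        by (apply Rmult_le_compat; try apply pow2_ge_0; lra).
      assert ((D / 2) ^ 3 <= s * D ^ 2 / 8).
      { replace ((D / 2) ^ 3) with (D * D ^ 2 / 8) by field.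
        apply Rmult_le_compat_r; [lra|]. apply Rmult_le_compat_r; [apply pow2_ge_0|lra]. }
      assert (0 <= s * D ^ 2) by (apply Rmult_le_pos; [lra|apply pow2_ge_0]).
      lra. }
    replace (2 / 3 * (D ^ 3 / s)) with (2 * s * D ^ 2 / (3 * x)) by (rewrite Hxe; field; lra).
    unfold Rdiv. rewrite Rabs_mult, (Rabs_pos_eq (/ (3 * x)))
      by (left; apply Rinv_0_lt_compat; lra).
    apply Rmult_le_compat_r; [left; apply Rinv_0_lt_compat; lra|exact Hn]. }
  rewrite E. eapply Rle_trans; [apply Rabs_triang|]. rewrite Rabs_Ropp.
  rewrite (Rabs_pos_eq (d ^ 2 * x * j ^ 2 / _)) by lra. lra.
Qed.

Lemma smooth_center_expansion (e : R) : 0 < s + e ->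
  D * smooth d x (s + e) - (8 * d ^ 2 + 4 * d - 1) / 3 * s
  = - e + d ^ 2 * e ^ 2 / (s + e) - (D ^ 2 * e ^ 2 / s + D ^ 2 * e ^ 3 / (3 * s ^ 2)).
Proof.
  intro He. pose proof D_lt_s. unfold smooth. rewrite x_eq_s2_div_D. field. lra.
Qed.

Lemma smooth_at_center (e : R) : - (1 / 2) <= e <= 1 / 2 + D ^ 2 / (8 * s) ->
  Rabs (D * smooth d x (s + e) - (8 * d ^ 2 + 4 * d - 1) / 3 * s) <= 5 * (D ^ 2 + D ^ 4 / s).
Proof.
  intro He. pose proof D_lt_s. pose proof D2_div_s_le.
  set (th := 1 + D ^ 2 / s).
  assert (Hth : 1 <= th <= s) by (unfold th; lra).
  assert (He1 : Rabs e <= th)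
    by (apply Rabs_le; unfold th; replace (D ^ 2 / (8 * s)) with (D ^ 2 / s / 8) in He by (field; lra); lra).
  assert (He2 : e ^ 2 <= th * s).
  { assert (e ^ 2 <= th ^ 2)
      by (rewrite <- pow2_abs; apply pow_incr; split; [apply Rabs_pos|lra]).
    simpl in *; nra. }
  assert (He3 : Rabs (e ^ 3) <= th * s ^ 2).
  { assert (Rabs (e ^ 3) <= th ^ 3)
      by (rewrite <- RPow_abs; apply pow_incr; split; [apply Rabs_pos|lra]).
    assert (th ^ 3 <= th * s ^ 2) by (simpl; nra). lra. }
  assert (HD2 : 0 < D ^ 2) by (apply pow_lt; lra).
  pose proof (smooth_center_expansion e ltac:(lra)) as E.
  assert (A1 : 0 <= d ^ 2 * e ^ 2 / (s + e) <= 2 * (D ^ 2 * th)).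
  { split; [apply Rdiv_le_0_compat; [apply Rmult_le_pos; apply pow2_ge_0|lra]|].
    replace (2 * (D ^ 2 * th)) with (D ^ 2 * (th * s) / (s / 2)) by (field; lra).
    apply div_le_div; [|lra]. split; [apply Rmult_le_pos; apply pow2_ge_0|].
    apply Rmult_le_compat; [apply pow2_ge_0|apply pow2_ge_0|apply pow_incr; lra|lra]. }
  assert (A2 : 0 <= D ^ 2 * e ^ 2 / s <= D ^ 2 * th).
  { split; [apply Rdiv_le_0_compat; [apply Rmult_le_pos; [lra|apply pow2_ge_0]|lra]|].
    replace (D ^ 2 * th) with (D ^ 2 * (th * s) / s) by (field; lra).
    apply div_le_div; [split; [apply Rmult_le_pos; [lra|apply pow2_ge_0]|]|lra].
    apply Rmult_le_compat_l; lra. }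
  assert (A3 : Rabs (D ^ 2 * e ^ 3 / (3 * s ^ 2)) <= D ^ 2 * th / 3).
  { assert (0 < / (3 * s ^ 2)) by (apply Rinv_0_lt_compat; apply Rmult_lt_0_compat; [lra|apply pow_lt; lra]).
    unfold Rdiv. rewrite !Rabs_mult, (Rabs_pos_eq (D ^ 2)), (Rabs_pos_eq (/ (3 * s ^ 2))) by lra.
    replace (D ^ 2 * th * / 3) with (D ^ 2 * (th * s ^ 2) * / (3 * s ^ 2)) by (field; lra).
    apply Rmult_le_compat_r; [lra|]. apply Rmult_le_compat_l; lra. }
  assert (Hth2 : D ^ 2 * th = D ^ 2 + D ^ 4 / s) by (unfold th; field; lra).
  assert (th <= D ^ 2 * th) by nra.
  rewrite E. eapply Rle_trans; [apply Rabs_triang|].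
  eapply Rle_trans; [apply Rplus_le_compat_r; apply Rabs_triang|].
  rewrite !Rabs_Ropp, (Rabs_pos_eq (d ^ 2 * e ^ 2 / (s + e))) by lra.
  pose proof (Rabs_triang (D ^ 2 * e ^ 2 / s) (D ^ 2 * e ^ 3 / (3 * s ^ 2))).
  rewrite (Rabs_pos_eq (D ^ 2 * e ^ 2 / s)) in * by lra.
  lra.
Qed.

Lemma center_location (K : R) : K <= (D + sqrt (D ^ 2 + 4 * D * x)) / 2 < K + 1 ->
  - (1 / 2) <= K - d / 2 - s <= 1 / 2 + D ^ 2 / (8 * s) /\ K <= x.
Proof.
  intro HK. pose proof D_lt_s. pose proof D2_div_s_le.
  set (w := sqrt (D ^ 2 + 4 * D * x)).
  assert (Hw0 : 0 <= w) by apply sqrt_pos.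
  assert (Hww : w * w = D ^ 2 + 4 * D * x) by (apply sqrt_sqrt; nra).
  assert (Hw1 : 2 * s <= w) by (simpl in Hsx; nra).
  assert (Hw2 : w <= 2 * s + D ^ 2 / (4 * s)).
  { set (a := 2 * s + D ^ 2 / (4 * s)).
    assert (0 <= D ^ 2 / (4 * s)) by (apply Rdiv_le_0_compat; [apply pow2_ge_0|lra]).
    assert (a * a = 4 * s ^ 2 + D ^ 2 + (D ^ 2 / (4 * s)) ^ 2) by (unfold a; field; lra).
    assert (0 <= (D ^ 2 / (4 * s)) ^ 2) by apply pow2_ge_0.
    destruct (Rle_or_lt w a) as [h|h]; [exact h|].
    assert (a * a < w * w) by (apply Rmult_le_0_lt_compat; unfold a in *; lra). lra. }
  assert (HxD : 2 * D <= x) by nra.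
  assert (Hw3 : w <= 2 * x - D).
  { destruct (Rle_or_lt w (2 * x - D)) as [h|h]; [exact h|].
    assert ((2 * x - D) * (2 * x - D) < w * w) by (apply Rmult_le_0_lt_compat; lra). nra. }
  replace (D ^ 2 / (8 * s)) with (D ^ 2 / (4 * s) / 2) by (field; lra).
  fold w in HK. lra.
Qed.

Section Window.

Variable K : R.
Hypothesis HK : - (1 / 2) <= K - d / 2 - s <= 1 / 2 + D ^ 2 / (8 * s).

Lemma window_near_s (i : R) : 0 <= i <= d -> s / 2 <= K - i /\ s - D <= K - i <= s + D.
Proof.
  intro Hi. pose proof D_lt_s.
  assert (D ^ 2 / (8 * s) <= D / 8).
  { replace (D / 8) with (D ^ 2 / (8 * D)) by (field; lra).
    apply div_le_div; [split; [apply pow2_ge_0|lra]|lra]. }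
  lra.
Qed.

Lemma smooth_linear_error (i : R) : 0 <= i <= d ->
  Rabs (smooth d x (K - i)
        - (smooth d x (K - d / 2) + (d / 2 - i) * smooth_deriv d x (K - d / 2)))
  + (2 * (d - (K - i) ^ 2 / x) ^ 2 + 22 * ((K - i) ^ 5 / x ^ 3))
  <= 4 + 743 * (D ^ 3 / s).
Proof.
  intro Hi. destruct (window_near_s i Hi) as [Hk2 Hk].
  pose proof D2_div_s_le. pose proof D_lt_s.
  assert (Hm : s / 2 <= K - d / 2 <= 2 * s).
  { replace (D ^ 2 / (8 * s)) with (D ^ 2 / s / 8) in HK by (field; lra). lra. }
  assert (Hj : Rabs (d / 2 - i) <= D / 2) by (apply Rabs_le; lra).
  pose proof (smooth_taylor (K - d / 2) (d / 2 - i) Hm Hj) as Ht.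
  replace (K - d / 2 + (d / 2 - i)) with (K - i) in Ht by ring.
  pose proof (smooth_error_near_s (K - i) Hk). specialize (Ht Hk2). lra.
Qed.

End Window.

End Scale.

Lemma sum_centered_linear_approx (n : nat) (a : nat -> R) (P L B : R) :
  (forall i, (i <= n)%nat -> Rabs (a i - (P + (INR n / 2 - INR i) * L)) <= B) ->
  Rabs (sum_f_R0 a n - (INR n + 1) * P) <= (INR n + 1) * B.
Proof.
  intro Ha.
  assert (Hlin : forall c N, sum_f_R0 (fun i => P + (c - INR i) * L) N
                 = (INR N + 1) * (P + c * L) - L * (INR N * (INR N + 1) / 2)).
  { intros c N. induction N as [|N IH]; [simpl; field|].
    rewrite tech5, IH, S_INR. field. }
  replace (sum_f_R0 a n - (INR n + 1) * P)
    with (sum_f_R0 (fun i => a i - (P + (INR n / 2 - INR i) * L)) n)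
    by (rewrite minus_sum, Hlin; field).
  eapply Rle_trans; [apply sum_f_R0_triangle|].
  eapply Rle_trans; [apply sum_Rle with (Bn := fun _ => B); exact Ha|].
  rewrite sum_cte, S_INR. lra.
Qed.

Lemma summand_linear_error (d : nat) (x s : R) (K : Z) :
  1 <= INR d -> 0 < x -> 0 < s -> s ^ 2 = (INR d + 1) * x -> 2 * (INR d + 1) ^ 2 <= s ^ 2 ->
  - (1 / 2) <= IZR K - INR d / 2 - s <= 1 / 2 + (INR d + 1) ^ 2 / (8 * s) -> IZR K <= x ->
  forall i : nat, (i <= d)%nat ->
  Rabs (summand d x (K - Z.of_nat i)
        - (smooth (INR d) x (IZR K - INR d / 2)
           + (INR d / 2 - INR i) * smooth_deriv (INR d) x (IZR K - INR d / 2)))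
  <= 4 + 743 * ((INR d + 1) ^ 3 / s).
Proof.
  intros Hd Hx Hs Hsx Hlarge HK HKx i Hi.
  assert (Hi' : 0 <= INR i <= INR d) by (split; [apply pos_INR|apply le_INR; lia]).
  assert (Hk : IZR (K - Z.of_nat i) = IZR K - INR i)
    by (rewrite minus_IZR, <- INR_IZR_INZ; reflexivity).
  destruct (window_near_s (INR d) x s Hd Hx Hs Hsx Hlarge _ HK _ Hi') as [Hk2 _].
  pose proof (summand_near_smooth d x (K - Z.of_nat i)) as H1. rewrite Hk in H1.
  specialize (H1 ltac:(lra)).
  pose proof (smooth_linear_error (INR d) x s Hd Hx Hs Hsx Hlarge _ HK _ Hi') as H2.
  eapply Rle_trans; [|exact H2].
  eapply Rle_trans; [|apply Rplus_le_compat_l, H1].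
  rewrite Rplus_comm. eapply Rle_trans; [|apply Rabs_triang]. right. f_equal. ring.
Qed.

Lemma LHS_error (d : nat) (x : R) : (1 <= d)%nat -> INR d + 1 <= x / 2 ->
  Rabs (LHS d x - (8 * INR d ^ 2 + 4 * INR d - 1) / 3 * sqrt ((INR d + 1) * x))
  <= 750 * ((INR d + 1) ^ 2 + (INR d + 1) ^ 4 / sqrt ((INR d + 1) * x)).
Proof.
  intros Hd Hx2.
  assert (Hdl : 1 <= INR d) by (apply (le_INR 1); lia).
  set (dl := INR d) in *. set (D := dl + 1) in *.
  assert (HD : 2 <= D) by (unfold D; lra).
  assert (Hx : 0 < x) by lra.
  set (s := sqrt (D * x)).
  assert (Hs : 0 < s) by (apply sqrt_lt_R0, Rmult_lt_0_compat; lra).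
  assert (Hsx : s ^ 2 = D * x) by (unfold s; rewrite pow2_sqrt; [reflexivity|nra]).
  assert (Hlarge : 2 * D ^ 2 <= s ^ 2) by (rewrite Hsx; simpl; nra).
  set (K := Kd (S d) x).
  assert (HKfloor : IZR K <= (D + sqrt (D ^ 2 + 4 * D * x)) / 2 < IZR K + 1)
    by (unfold K, Kd; rewrite S_INR; apply floorR_spec).
  destruct (center_location dl x s Hdl Hx Hs Hsx Hlarge _ HKfloor) as [HK HKx].
  set (m := IZR K - dl / 2).
  pose proof (sum_centered_linear_approx d _ _ _ _
                (summand_linear_error d x s K Hdl Hx Hs Hsx Hlarge HK HKx))
    as Hsum.
  pose proof (smooth_at_center dl x s Hdl Hx Hs Hsx Hlarge (IZR K - dl / 2 - s) HK) as Hc.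
  replace (s + (IZR K - dl / 2 - s)) with m in Hc by (unfold m; ring).
  fold dl D m in Hsum, Hc. unfold LHS. cbv zeta. fold K s.
  replace (sum_f_R0 (fun i => summand d x (K - Z.of_nat i)) d - (8 * dl ^ 2 + 4 * dl - 1) / 3 * s)
    with ((sum_f_R0 (fun i => summand d x (K - Z.of_nat i)) d - D * smooth dl x m)
          + (D * smooth dl x m - (8 * dl ^ 2 + 4 * dl - 1) / 3 * s)) by ring.
  eapply Rle_trans; [apply Rabs_triang|].
  assert (D * (4 + 743 * (D ^ 3 / s)) = 4 * D + 743 * (D ^ 4 / s)) by (field; lra).
  assert (0 <= D ^ 4 / s) by (apply Rdiv_le_0_compat; [apply pow_le|]; lra).
  assert (4 * D <= 2 * D ^ 2) by (simpl; nra).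
  lra.
Qed.

Lemma error_scale (d x : R) : 1 <= d -> 0 < x ->
  (d + 1) ^ 2 + (d + 1) ^ 4 / sqrt ((d + 1) * x)
  <= 128 * (d ^ 3 * sqrt d / sqrt x + d ^ 2).
Proof.
  intros Hd Hx.
  set (tau := sqrt (d + 1)). set (sg := sqrt d). set (y := sqrt x).
  assert (Ht : 0 < tau) by (apply sqrt_lt_R0; lra).
  assert (Hsg : 0 < sg) by (apply sqrt_lt_R0; lra).
  assert (Hy : 0 < y) by (apply sqrt_lt_R0; lra).
  assert (Ht2 : tau * tau = d + 1) by (apply sqrt_sqrt; lra).
  assert (Hsg2 : sg * sg = d) by (apply sqrt_sqrt; lra).
  rewrite sqrt_mult by lra. fold tau y.
  assert (Hts : tau <= 2 * sg).
  { destruct (Rle_or_lt tau (2 * sg)) as [h|h]; [exact h|].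
    assert ((2 * sg) * (2 * sg) < tau * tau) by (apply Rmult_le_0_lt_compat; lra). nra. }
  replace ((d + 1) ^ 4 / (tau * y)) with (tau ^ 7 / y) by (rewrite <- Ht2; field; lra).
  replace (d ^ 3 * sg / y) with (sg ^ 7 / y) by (rewrite <- Hsg2; field; lra).
  assert (tau ^ 7 / y <= 128 * (sg ^ 7 / y)).
  { replace (128 * (sg ^ 7 / y)) with ((2 * sg) ^ 7 / y) by (field; lra).
    apply div_le_div; [split; [apply pow_le; lra|apply pow_incr; lra]|lra]. }
  assert ((d + 1) ^ 2 <= 4 * d ^ 2) by (simpl; nra).
  assert (0 <= d ^ 2) by apply pow2_ge_0. lra.
Qed.

Theorem proposition8 :
  exists C : R, forall (d : nat) (x : R),
    (1 <= d)%nat -> INR d + 1 <= x / 2 ->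
    Rabs (LHS d x - (8 * INR d ^ 2 + 4 * INR d - 1) / 3 * sqrt ((INR d + 1) * x))
      <= C * (INR d ^ 3 * sqrt (INR d) / sqrt x + INR d ^ 2).
Proof.
  exists (750 * 128). intros d x Hd Hx.
  eapply Rle_trans; [exact (LHS_error d x Hd Hx)|].
  assert (Hdl : 1 <= INR d) by (apply (le_INR 1); lia).
  pose proof (error_scale (INR d) x Hdl ltac:(lra)). lra.
Qed.
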